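(* Let $\mathbb{Z}$ be a finite-dimensional Euclidean space, $L>0$, $\beta_k\in(0,1)$, $\eta_k=(1-\beta_k)/L$, $z^0,\tilde z^0,\tilde z^1,\dots\in\mathbb{Z}$, and $z^{k+1}=\beta_kz^0+(1-\beta_k)z^k-\eta_k\tilde z^k$ for $k\ge0$. Then for all $k\ge0$: (1) $z^{k+1}-z^k=\beta_k(z^0-z^k)-\frac{1-\beta_k}{L}\tilde z^k$; (2) $z^{k+1}-z^k=\frac{\beta_k}{1-\beta_k}(z^0-z^{k+1})-\frac1L\tilde z^k$; (3) $z^{k+1}-z^k=-\frac{1-\beta_k}{L}\tilde z^k+\sum_{i=0}^{k-1}\frac{\beta_k}{L}\Big(\prod_{j=i}^{k-1}(1-\beta_j)\Big)\tilde z^i$. Moreover, if $\beta_k=1/(k+2)$, then $\|z^1-z^0\|^2\le\frac1{4L^2}\|\tilde z^0\|^2$ and for $k\ge1$, \[\|z^{k+1}-z^k\|^2\le\frac{2(k+1)^2}{L^2(k+2)^2}\|\tilde z^k\|^2+\frac{2k}{L^2(k+1)^2(k+2)^2}\sum_{i=0}^{k-1}(i+1)^2\|\tilde z^i\|^2.\] *)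

(* The finite-dimensional Euclidean space is modelled as
   R^n = 'rV[R]_n with the standard Euclidean norm, R : realType. *)
From HB Require Import structures.
From mathcomp Require Import all_boot all_order all_algebra.
From mathcomp Require Import reals.
Set Implicit Arguments. Unset Strict Implicit. Unset Printing Implicit Defensive.
Import Order.TTheory GRing.Theory Num.Theory.
Local Open Scope ring_scope.

Definition enorm (R : realType) (n : nat) (v : 'rV[R]_n) : R :=
  Num.sqrt (\sum_(i < n) (v ord0 i) ^+ 2).

From HB Require Import structures.
From mathcomp Require Import all_boot all_order all_algebra.
From mathcomp Require Import reals.
From mathcomp Require Import ring lra.
Set Implicit Arguments. Unset Strict Implicit. Unset Printing Implicit Defensive.
Import Order.TTheory GRing.Theory Num.Theory.
Local Open Scope ring_scope.

(** Unrolling the recursion expresses the gap [z^0 - z^k] as a combination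
    of the earlier [z~^i] with weights [L^-1 \prod_(i <= j < k) (1 - beta_j)];
    substituting it in the one-step formula gives (3).  For [beta_k = 1/(k+2)]
    the products telescope to [(i+1)/(k+1)], and the bound follows from
    [|a + b|^2 <= 2|a|^2 + 2|b|^2] and Cauchy-Schwarz for a sum of [k] vectors. *)

Lemma sqr_sum_le (R : realFieldType) (k : nat) (x : nat -> R) :
  (\sum_(0 <= i < k) x i) ^+ 2 <= k%:R * \sum_(0 <= i < k) x i ^+ 2.
Proof.
elim: k => [|k IH]; first by rewrite !big_geq // mul0r expr0n.
rewrite !big_nat_recr //= -natr1.
set S := \sum_(0 <= i < k) x i; set Q := \sum_(0 <= i < k) x i ^+ 2.
rewrite -/S -/Q in IH.
have cross : 2 * S * x k <= Q + k%:R * x k ^+ 2.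
  have -> : Q + k%:R * x k ^+ 2 = \sum_(0 <= i < k) (x i ^+ 2 + x k ^+ 2).
    by rewrite big_split /= sumr_const_nat subn0 mulr_natl.
  rewrite /S mulr_sumr mulr_suml; apply: ler_sum => i _.
  have := sqr_ge0 (x i - x k); nra.
nra.
Qed.

Section SquaredNorm.
Variables (R : realFieldType) (n : nat).
Implicit Types (u v : 'rV[R]_n) (c : R).

Definition sqnorm v : R := \sum_(i < n) v ord0 i ^+ 2.

Lemma sqnorm_ge0 v : 0 <= sqnorm v.
Proof. by apply: sumr_ge0 => i _; exact: sqr_ge0. Qed.

Lemma sqnormZ c v : sqnorm (c *: v) = c ^+ 2 * sqnorm v.
Proof. by rewrite /sqnorm mulr_sumr; apply: eq_bigr => i _; rewrite mxE exprMn. Qed.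

Lemma sqnormN v : sqnorm (- v) = sqnorm v.
Proof. by apply: eq_bigr => i _; rewrite mxE sqrrN. Qed.

Lemma sqnormD_le u v : sqnorm (u + v) <= 2 * sqnorm u + 2 * sqnorm v.
Proof.
rewrite /sqnorm !mulr_sumr -big_split; apply: ler_sum => i _; rewrite mxE /=.
have := sqr_ge0 (u ord0 i - v ord0 i); nra.
Qed.

Lemma sqnorm_sum_le (k : nat) (v : nat -> 'rV[R]_n) :
  sqnorm (\sum_(0 <= i < k) v i) <= k%:R * \sum_(0 <= i < k) sqnorm (v i).
Proof.
rewrite /sqnorm; under eq_bigr do rewrite summxE.
rewrite (exchange_big_dep xpredT) //= mulr_sumr.
by apply: ler_sum => j _; exact: sqr_sum_le.
Qed.

End SquaredNorm.

Lemma enorm_sqr (R : realType) (n : nat) (v : 'rV[R]_n) : enorm v ^+ 2 = sqnorm v.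
Proof. by rewrite /enorm sqr_sqrtr // sqnorm_ge0. Qed.

Section AnchoredIteration.
Variables (F : fieldType) (n : nat) (L : F) (beta : nat -> F).
Variables (z zt : nat -> 'rV[F]_n).
Hypothesis z_rec : forall k, z k.+1 =
  beta k *: z 0%N + (1 - beta k) *: z k - ((1 - beta k) / L) *: zt k.

Lemma step_toward_anchor k :
  z k.+1 - z k = beta k *: (z 0%N - z k) - ((1 - beta k) / L) *: zt k.
Proof. by rewrite z_rec; apply/rowP => j; rewrite !mxE; ring. Qed.

Lemma step_toward_anchor_next k : beta k != 1 ->
  z k.+1 - z k = (beta k / (1 - beta k)) *: (z 0%N - z k.+1) - L^-1 *: zt k.
Proof.
move=> beta_neq1; rewrite z_rec; apply/rowP => j; rewrite !mxE.
move: L^-1 => l; field.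
by rewrite subr_eq0 eq_sym.
Qed.

Lemma anchor_gap k : z 0%N - z k =
  \sum_(0 <= i < k) (L^-1 * \prod_(i <= j < k) (1 - beta j)) *: zt i.
Proof.
elim: k => [|k IH]; first by rewrite subrr big_geq.
rewrite big_nat_recr //= big_nat1.
rewrite (eq_big_nat _ _ (F2 := fun i => (1 - beta k) *:
      ((L^-1 * \prod_(i <= j < k) (1 - beta j)) *: zt i))); last first.
  move=> i /andP[_ lt_ik]; rewrite big_nat_recr /=; last exact: ltnW.
  by rewrite scalerA; congr (_ *: _); ring.
by rewrite -scaler_sumr -IH z_rec; apply/rowP => j; rewrite !mxE; ring.
Qed.

Lemma step_sum k : z k.+1 - z k = - (((1 - beta k) / L) *: zt k)
  + \sum_(0 <= i < k) ((beta k / L) * \prod_(i <= j < k) (1 - beta j)) *: zt i.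
Proof.
under eq_bigr do rewrite -mulrA -scalerA.
by rewrite -scaler_sumr -anchor_gap step_toward_anchor addrC.
Qed.

End AnchoredIteration.

Lemma prod_harmonic (R : numFieldType) (i k : nat) : (i <= k)%N ->
  \prod_(i <= j < k) (1 - 1 / (j.+2)%:R) = (i.+1)%:R / (k.+1)%:R :> R.
Proof.
elim: k => [|k IH].
  by rewrite leqn0 => /eqP ->; rewrite big_geq // divff ?pnatr_eq0.
rewrite leq_eqVlt => /orP[/eqP ->|lt_ik]; first by rewrite big_geq // divff ?pnatr_eq0.
rewrite big_nat_recr //= IH //; field.
by rewrite nat1r -natrD !pnatr_eq0.
Qed.

Section HarmonicWeights.
Variables (R : realFieldType) (n : nat) (L : R) (z zt : nat -> 'rV[R]_n).
Hypothesis L_neq0 : L != 0.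
Hypothesis z_rec : forall k, z k.+1 = 1 / (k.+2)%:R *: z 0%N
  + (1 - 1 / (k.+2)%:R) *: z k - ((1 - 1 / (k.+2)%:R) / L) *: zt k.

Lemma step_harmonic k : z k.+1 - z k =
  - (((k.+1)%:R / ((k.+2)%:R * L)) *: zt k)
  + ((k.+1)%:R * (k.+2)%:R * L)^-1 *: \sum_(0 <= i < k) (i.+1)%:R *: zt i.
Proof.
rewrite (step_sum z_rec) scaler_sumr; congr (- (_ *: _) + _).
  by field; rewrite L_neq0 ?nat1r -?natrD !pnatr_eq0.
apply: eq_big_nat => i /andP[_ lt_ik]; rewrite scalerA prod_harmonic 1?ltnW //.
by congr (_ *: _); field; rewrite L_neq0 ?nat1r -?natrD !pnatr_eq0.
Qed.

Lemma first_step_sqnorm : sqnorm (z 1%N - z 0%N) = 1 / (4 * L ^+ 2) * sqnorm (zt 0%N).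
Proof.
rewrite step_harmonic big_geq // scaler0 addr0 sqnormN sqnormZ; congr (_ * _).
by field; rewrite L_neq0.
Qed.

Lemma step_sqnorm_le k : sqnorm (z k.+1 - z k) <=
  (2 * (k.+1)%:R ^+ 2) / (L ^+ 2 * (k.+2)%:R ^+ 2) * sqnorm (zt k)
  + (2 * k%:R) / (L ^+ 2 * (k.+1)%:R ^+ 2 * (k.+2)%:R ^+ 2)
    * \sum_(0 <= i < k) (i.+1)%:R ^+ 2 * sqnorm (zt i).
Proof.
rewrite step_harmonic; apply: le_trans (sqnormD_le _ _) _.
rewrite sqnormN !sqnormZ; apply: lerD.
  rewrite le_eqVlt; apply/orP; left; apply/eqP.
  by field; rewrite L_neq0 ?nat1r -?natrD !pnatr_eq0.
set e := ((k.+1)%:R * (k.+2)%:R * L)^-1.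
have weighted_sum_le : sqnorm (\sum_(0 <= i < k) (i.+1)%:R *: zt i) <=
    k%:R * \sum_(0 <= i < k) (i.+1)%:R ^+ 2 * sqnorm (zt i).
  apply: le_trans (sqnorm_sum_le k (fun i => (i.+1)%:R *: zt i)) _.
  by under eq_bigr do rewrite sqnormZ.
have -> : (2 * k%:R) / (L ^+ 2 * (k.+1)%:R ^+ 2 * (k.+2)%:R ^+ 2) = 2 * (e ^+ 2 * k%:R).
  by rewrite /e; field; rewrite L_neq0 ?nat1r -?natrD !pnatr_eq0.
rewrite -mulrA ler_wpM2l // -[X in _ <= X]mulrA.
exact: ler_wpM2l (sqr_ge0 e) _ _ weighted_sum_le.
Qed.

End HarmonicWeights.

Theorem lemma14 (R : realType) (n : nat) (L : R) (beta : nat -> R)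
  (z zt : nat -> 'rV[R]_n) :
  0 < L ->
  (forall k, 0 < beta k < 1) ->
  (forall k, z k.+1 = beta k *: z 0%N + (1 - beta k) *: z k
                      - ((1 - beta k) / L) *: zt k) ->
  (forall k : nat,
     [/\ z k.+1 - z k = beta k *: (z 0%N - z k) - ((1 - beta k) / L) *: zt k,
         z k.+1 - z k = (beta k / (1 - beta k)) *: (z 0%N - z k.+1) - L^-1 *: zt k
       & z k.+1 - z k = - (((1 - beta k) / L) *: zt k)
           + \sum_(0 <= i < k)
               ((beta k / L) * \prod_(i <= j < k) (1 - beta j)) *: zt i])
  /\
  ((forall k : nat, beta k = 1 / (k.+2)%:R) ->
     enorm (z 1%N - z 0%N) ^+ 2 <= 1 / (4 * L ^+ 2) * enorm (zt 0%N) ^+ 2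
     /\
     (forall k : nat, (1 <= k)%N ->
        enorm (z k.+1 - z k) ^+ 2 <=
          (2 * (k.+1)%:R ^+ 2) / (L ^+ 2 * (k.+2)%:R ^+ 2) * enorm (zt k) ^+ 2
          + (2 * k%:R) / (L ^+ 2 * (k.+1)%:R ^+ 2 * (k.+2)%:R ^+ 2)
            * \sum_(0 <= i < k) (i.+1)%:R ^+ 2 * enorm (zt i) ^+ 2)).
Proof.
move=> L_gt0 beta01 z_rec; split.
  move=> k; have /andP[_ beta_lt1] := beta01 k.
  split; [exact: step_toward_anchor | | exact: step_sum].
  by apply: step_toward_anchor_next => //; rewrite lt_eqF.
move=> beta_harmonic.
have z_rec_harmonic : forall k, z k.+1 = 1 / (k.+2)%:R *: z 0%N
    + (1 - 1 / (k.+2)%:R) *: z k - ((1 - 1 / (k.+2)%:R) / L) *: zt k.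
  by move=> k; rewrite z_rec beta_harmonic.
have L_neq0 : L != 0 by rewrite gt_eqF.
split; first by rewrite !enorm_sqr (first_step_sqnorm L_neq0 z_rec_harmonic).
move=> k _; rewrite !enorm_sqr; under eq_bigr do rewrite enorm_sqr.
exact: step_sqnorm_le.
Qed.
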